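(* Let $K/F$ be any quadratic field extension (of any characteristic, separable or not). An element $n\in F$ is a norm from $K$ (i.e. $n=\mathrm{N}_{K/F}(\alpha)$ for some $\alpha\in K$) if and only if $n=-\det[X,Y]$ for some $X,Y\in\mathbb{M}_2(F)$ such that $K$ is the splitting field over $F$ of the characteristic polynomial of $X$.
   Context: $[X,Y]=XY-YX$. *)

From HB Require Import structures.
From mathcomp Require Import all_boot all_order all_algebra all_field.
Set Implicit Arguments. Unset Strict Implicit. Unset Printing Implicit Defensive.
Import GRing.Theory.
Local Open Scope ring_scope.

Definition commmx (R : comNzRingType) (n : nat) (X Y : 'M[R]_n) : 'M[R]_n :=
  X *m Y - Y *m X.

(* The norm N_{K/F}(a): determinant of the F-linear map x |-> x * a on K,
   computed in the (canonical) basis vbasis {:K}; independent of the basis. *)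
Definition normK (F : fieldType) (K : fieldExtType F) (a : K) : F :=
  \det (passmx.mxof (vbasis {:K}) (vbasis {:K}) (amulr a)).

(* Pick th in K outside F. Then (th, 1) is an F-basis of K, th^2 = t th - p,
   and N(y th + x) = x^2 + t x y + p y^2 is the norm form of X^2 - t X + p.
   For the companion matrix C of that polynomial and Y = [[-y, x], [0, 0]],
   -det [C, Y] is the same form, and K is the splitting field of X^2 - t X + p.
   Conversely, a root th of char_poly X outside F forces X 1 0 <> 0 (otherwise
   the roots are the diagonal entries), and then -det [X, Y] is a value of the
   norm form of char_poly X, i.e. a norm of an element y th + x. *)

From HB Require Import structures.
From mathcomp Require Import all_boot all_order all_algebra all_field.
From mathcomp Require Import ring.
Set Implicit Arguments. Unset Strict Implicit. Unset Printing Implicit Defensive.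
Import GRing.Theory.
Local Open Scope ring_scope.

Definition norm_form {R : comNzRingType} (t p x y : R) : R :=
  x ^+ 2 + t * x * y + p * y ^+ 2.

Definition mx22 {R : Type} (a b c d : R) : 'M[R]_2 :=
  \matrix_(i < 2, j < 2)
    if i == 0 then (if j == 0 then a else b) else (if j == 0 then c else d).

Lemma lift0_ord2 : lift (0 : 'I_2) 0 = 1. Proof. exact: val_inj. Qed.

Lemma det_mx22 (R : comNzRingType) (A : 'M[R]_2) :
  \det A = A 0 0 * A 1 1 - A 0 1 * A 1 0.
Proof.
rewrite (expand_det_row _ 0) !big_ord_recl big_ord0 /cofactor !det_mx11 !mxE /=.
rewrite addr0 expr0 mul1r expr1 mulN1r mulrN lift0_ord2.
by have -> : lift (1 : 'I_2) (0 : 'I_1) = 0 by apply/val_inj.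
Qed.

Lemma mxtrace_mx22 (R : comNzRingType) (A : 'M[R]_2) : \tr A = A 0 0 + A 1 1.
Proof. by rewrite /mxtrace !big_ord_recl big_ord0 addr0 /= lift0_ord2. Qed.

Lemma mulmx22E (R : comNzRingType) (A B : 'M[R]_2) i j :
  (A *m B) i j = A i 0 * B 0 j + A i 1 * B 1 j.
Proof. by rewrite mxE !big_ord_recl big_ord0 addr0 /= lift0_ord2. Qed.

Lemma char_poly_mx22 (R : comNzRingType) (A : 'M[R]_2) :
  char_poly A = 'X^2 - (\tr A) *: 'X + (\det A)%:P.
Proof.
rewrite /char_poly !det_mx22 mxtrace_mx22 /char_poly_mx !mxE /= mulr1n mulr0n.
rewrite !sub0r -mul_polyC polyCD polyCB !polyCM expr2; ring.
Qed.

Lemma commmx22E (R : comNzRingType) (X Y : 'M[R]_2) i j :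
  commmx X Y i j = X i 0 * Y 0 j + X i 1 * Y 1 j - (Y i 0 * X 0 j + Y i 1 * X 1 j).
Proof. by rewrite /commmx mxE [X in _ + X]mxE !mulmx22E. Qed.

Lemma det_commmx_companion (R : comNzRingType) (t p x y : R) :
  - \det (commmx (mx22 0 (- p) 1 t) (mx22 (- y) x 0 0)) = norm_form t p x y.
Proof.
rewrite det_mx22 !commmx22E !mxE /= /norm_form; ring.
Qed.

(* Since X 1 0 <> 0, X is conjugate to the companion matrix of its
   characteristic polynomial, and Y only matters modulo F 1 + F X, which lets
   one kill its bottom row; the witnesses below are what this reduction gives. *)
Lemma det_commmx_norm_form (F : fieldType) (X Y : 'M[F]_2) : X 1 0 != 0 ->
  exists x y, - \det (commmx X Y) = norm_form (\tr X) (\det X) x y.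
Proof.
move=> c_neq0; set a := X 0 0; set b := X 0 1; set c := X 1 0; set d := X 1 1.
set e := Y 0 0; set f := Y 0 1; set g := Y 1 0; set h := Y 1 1.
exists ((c * (e * a + f * c - a * h - b * g) + g * a * (d - a)) / c).
exists (- (c * (e - h) + g * (d - a)) / c).
rewrite mxtrace_mx22 !det_mx22 !commmx22E /norm_form -/a -/b -/c -/d -/e -/f -/g -/h.
by field.
Qed.

Lemma det_castmx (R : comNzRingType) n m (h : n = m) (M : 'M[R]_n) :
  \det (castmx (h, h) M) = \det M.
Proof. by case: m / h; rewrite castmx_id. Qed.

Section FieldExtension.
Variables (F : fieldType) (K : fieldExtType F).

Lemma normK_basis (e : (\dim {:K}).-tuple K) (a : K) :
  basis_of fullv e -> normK a = \det (passmx.mxof e e (amulr a)).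
Proof.
move=> eb; rewrite /normK; set b := vbasis _; have bb : basis_of fullv b := vbasisP _.
have -> : passmx.mxof e e (amulr a) =
    passmx.mxof e b \1 *m passmx.mxof b b (amulr a) *m passmx.mxof b e \1.
  by rewrite -!(passmx.mxof_comp _ _ bb) comp_lfun1l comp_lfun1r.
rewrite !det_mulmx mulrAC -det_mulmx -(passmx.mxof_comp e e bb) comp_lfun1l.
by rewrite passmx.mxof1 ?det1 ?mul1r // (basis_free eb).
Qed.

Lemma mxofE (e : (\dim {:K}).-tuple K) (f : 'End(K)) i j :
  passmx.mxof e e f i j = coord e j (f e`_i).
Proof. by rewrite /passmx.mxof mxE /= passmx.vecof_delta mxE. Qed.

Lemma root_quadratic (t p : F) (z : K) :
  root (map_poly (in_alg K) ('X^2 - t *: 'X + p%:P)) z = (z ^+ 2 == t *: z - p%:A).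
Proof.
rewrite rootE rmorphD rmorphB /= map_polyXn map_polyZ map_polyC map_polyX /=.
by rewrite !hornerE /= mulr_algl addr_eq0 subr_eq addrC.
Qed.

Lemma quadratic_split_root_mem1v (u v : F) (z : K) :
  z ^+ 2 = (u + v) *: z - (u * v)%:A -> z \in 1%VS.
Proof.
move=> hz; have : (z - u%:A) * (z - v%:A) = 0.
  have uvE : (u * v)%:A = u%:A * v%:A :> K by rewrite -scalerAl mul1r scalerA.
  rewrite -[(u + v) *: z]mulr_algl scalerDl uvE in hz.
  have -> : (z - u%:A) * (z - v%:A) = z ^+ 2 - ((u%:A + v%:A) * z - u%:A * v%:A).
    by ring.
  by rewrite hz subrr.
by move/eqP; rewrite mulf_eq0 !subr_eq0 => /orP[]/eqP->; rewrite rpredZ ?mem1v.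
Qed.

End FieldExtension.

Section QuadraticExtension.
Variables (F : fieldType) (K : fieldExtType F) (hK : \dim {:K} = 2%N).

Lemma exists_notin1v : exists z : K, z \notin 1%VS.
Proof.
have /subvPn[z _ zF] : ~~ ({:K} <= 1)%VS.
  by apply/negP => /dimvS; rewrite hK dimv1.
by exists z.
Qed.

Lemma splitting_root_notin1v (P : {poly K}) :
  splittingFieldFor 1 P fullv -> exists2 z, root P z & z \notin 1%VS.
Proof.
case=> rs /eqp_root rootP rsE.
have /hasP[z z_rs zF] : has (fun z => z \notin 1%VS) rs.
  apply/negPn/negP => /hasPn rsF.
  have : (<<1 & rs>> <= 1)%VS by apply/Fadjoin_seqP; split=> // w /rsF/negPn.
  by rewrite rsE => /dimvS; rewrite hK dimv1.
by exists z; rewrite // rootP root_prod_XsubC.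
Qed.

Variables (th : K) (thF : th \notin 1%VS).

Let e : (\dim {:K}).-tuple K := tcast (esym hK) [tuple th; 1].
Let i0 : 'I_(\dim {:K}) := cast_ord (esym hK) 0.
Let i1 : 'I_(\dim {:K}) := cast_ord (esym hK) 1.

Lemma gen_basis : basis_of fullv e.
Proof.
rewrite basisEfree subvf size_tuple leqnn andbT val_tcast /=.
by rewrite free_cons span_seq1 thF seq1_free oner_neq0.
Qed.

Lemma span_gen : <<[:: th; 1%R]>>%VS = fullv.
Proof. by have := span_basis gen_basis; rewrite val_tcast. Qed.

Lemma gen_decomp (a : K) : exists x y : F, a = y *: th + x%:A.
Proof.
have : a \in <<[:: th; 1%R]>>%VS by rewrite span_gen memvf.
rewrite span_cons span_seq1 => /memv_addP [_ /vlineP[y ->] [_ /vlineP[x ->] ->]].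
by exists x, y.
Qed.

Lemma coord_gen (x y : F) :
  coord e i0 (y *: th + x%:A) = y /\ coord e i1 (y *: th + x%:A) = x.
Proof.
have ce j : coord e j (y *: th + x%:A) = y * (i0 == j)%:R + x * (i1 == j)%:R.
  have cf i := coord_free i j (basis_free gen_basis).
  by rewrite linearD !linearZ /= -(cf i0) -(cf i1) val_tcast.
by rewrite !ce !eqxx /= !mulr1 !mulr0 addr0 add0r.
Qed.

Variables (t p : F) (hth : th ^+ 2 = t *: th - p%:A).

Lemma normK_gen (x y : F) : normK (y *: th + x%:A) = norm_form t p x y.
Proof.
have thM : th * (y *: th + x%:A) = (t * y + x) *: th + (- (p * y))%:A.
  rewrite mulrDr -scalerAr -expr2 hth mulr_algr scalerBr !scalerA scalerDl scaleNr.
  by rewrite [y * t]mulrC [y * p]mulrC addrAC.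
rewrite (normK_basis _ gen_basis) -(det_castmx hK) det_mx22 !castmxE /=.
rewrite -/i0 -/i1 !mxofE !lfunE /=.
have [-> ->] : e`_i0 = th /\ e`_i1 = 1 by rewrite !val_tcast.
rewrite thM mul1r.
have [-> ->] := coord_gen x y.
have [-> ->] := coord_gen (- (p * y)) (t * y + x).
by rewrite /norm_form; ring.
Qed.

Lemma splittingFieldFor_quadratic :
  splittingFieldFor 1 (map_poly (in_alg K) ('X^2 - t *: 'X + p%:P)) fullv.
Proof.
exists [:: th; t%:A - th].
  rewrite !big_cons big_nil mulr1 rmorphD rmorphB /= map_polyXn map_polyZ.
  rewrite map_polyC map_polyX /= -!mul_polyC.
  have thE : (p%:A)%:P = th%:P * (t%:A - th)%:P.
    by rewrite -polyCM mulrBr -expr2 hth mulr_algr opprB addrC subrK.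
  by rewrite thE polyCB; apply/eqpW; rewrite expr2; ring.
apply/eqP; rewrite eqEsubv subvf /= -span_gen.
apply/span_subvP => z; rewrite !inE => /orP[/eqP->|/eqP->].
  by apply: seqv_sub_adjoin; rewrite mem_head.
by apply: (subvP (subv_adjoin_seq _ _)); rewrite memv_line.
Qed.

End QuadraticExtension.

Theorem theorem5p1 (F : fieldType) (K : fieldExtType F)
    (hK : \dim {:K} = 2%N) (n : F) :
  (exists a : K, normK a = n) <->
  (exists X Y : 'M[F]_2,
      n = - \det (commmx X Y) /\
      splittingFieldFor 1%VS (map_poly (in_alg K) (char_poly X)) {:K}).
Proof.
split=> [[a <-] | [X [Y [-> splitX]]]].
- have [th thF] := exists_notin1v hK.
  have [x [y ->]] := gen_decomp hK thF a.
  have [s [t thE]] := gen_decomp hK thF (th ^+ 2).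
  have hth : th ^+ 2 = t *: th - (- s)%:A by rewrite thE scaleNr opprK addrC.
  set p := - s in hth; exists (mx22 0 (- p) 1 t), (mx22 (- y) x 0 0).
  rewrite det_commmx_companion (normK_gen hK thF hth); split=> //.
  rewrite char_poly_mx22 mxtrace_mx22 det_mx22 !mxE /= add0r mul0r mulr1 sub0r opprK.
  exact: (splittingFieldFor_quadratic hK thF hth).
- rewrite char_poly_mx22 in splitX.
  have [th] := splitting_root_notin1v hK splitX.
  rewrite root_quadratic => /eqP hth thF.
  have [c_eq0 | c_neq0] := eqVneq (X 1 0) 0.
    move: hth; rewrite mxtrace_mx22 det_mx22 c_eq0 mulr0 subr0.
    by move/quadratic_split_root_mem1v; rewrite (negPf thF).
  have [x [y ->]] := det_commmx_norm_form Y c_neq0.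
  by exists (y *: th + x%:A); rewrite (normK_gen hK thF hth).
Qed.
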